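(* Let $\Gamma$ be a scale on $\overline{\mathcal N}$ such that $\Gamma(x,\cdot)$ is continuous for every $x\in\overline{\mathcal N}$. Let $G$ denote the group $F(\mathcal N)$ equipped with the left-invariant metric $\delta_\Gamma$. Then for every $w\in\overline{\mathcal N}$ (viewed as an element of $F(\mathcal N)$) and every $r\in\mathbb R_+$, $\Gamma_G(w,r)\le\Gamma(w,r)$.
   Context: Free groups: for a nonempty set $X$, let $X^{-1}=\{x^{-1}:x\in X\}$ be a disjoint copy of $X$ and $e\notin X\cup X^{-1}$ a new symbol; put $\overline{X}=X\cup X^{-1}\cup\{e\}$, with $(x^{-1})^{-1}=x$ and $e^{-1}=e$. $W(X)$ is the set of nonempty finite words over $\overline X$, $|w|$ the length of $w$. A word is irreducible if it is $e$ or $x_0\cdots x_n$ with all $x_i\ne e$ and $x_i\ne x_{i+1}^{-1}$. The reduced word $w'$ of $w\in W(X)$ is obtained by repeatedly replacing occurrences of $xx^{-1}$ by $e$ and deleting $e$ from $w_1ew_2$ when $w_1$ or $w_2$ is nonempty. $F(X)$ is the set of irreducible words with product $u\cdot v=(u^\frown v)'$; it is the free group on $X$ with identity $e$. Metric on $\overline X$: if $d\le 1$ is a metric on $X$, extend it to $\overline X$ by $d(x^{-1},y^{-1})=d(x,y)$ and $d(x^{-1},y)=d(x,e)=d(x^{-1},e)=1$ for $x,y\in X$ (symmetric, $d(e,e)=0$). Match: for $m\le n$, a bijection $\theta$ of $\{m,\dots,n\}$ with $\theta^2=\mathrm{id}$ and no $i<j<\theta(i)<\theta(j)$. Scale: $\Gamma:\overline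 X\times\mathbb{R}_+\to\mathbb{R}_+$ such that for all $x\in\overline X$, $r\in\mathbb{R}_+$: (i) $\Gamma(e,r)=r$ and $\Gamma(x,r)\ge r$; (ii) $\Gamma(x,r)=0$ iff $r=0$; (iii) $\Gamma(x,\cdot)$ is monotone increasing; (iv) $\lim_{r\to0}\Gamma(x,r)=0$. Norms and metrics: for $w\in W(X)$ with $|w|=l+1$ and a match $\theta$ on $\{0,\dots,l\}$, define $N^\theta_\Gamma(w)$ by induction on $l$: if $l=0$ and $w=x$, $N^\theta_\Gamma(w)=d(e,x)$; if $l>0$ and $\theta(0)=k<l$, write $w=w_1^\frown w_2$ with $|w_1|=k+1$ and set $N^\theta_\Gamma(w)=N^{\theta\restriction\{0..k\}}_\Gamma(w_1)+N^{\theta\restriction\{k+1..l\}}_\Gamma(w_2)$; if $l>0$ and $\theta(0)=l$, write $w=x^{-1}w_1y$ with $x,y\in\overline X$ and set $N^\theta_\Gamma(w)=d(x,y)+\max\{\Gamma(x,N^{\theta_1}_\Gamma(w_1)),\Gamma(y,N^{\theta_1}_\Gamma(w_1))\}$ with $\theta_1=\theta\restriction\{1,\dots,l-1\}$ (and $N^{\theta_1}_\Gamma(w_1)=0$ if $w_1$ is empty). For $w\in F(X)$, $N_\Gamma(w)=\inf\{N^\theta_\Gamma(w^* ): w^*\in W(X),\ (w^* )'=w,\ \theta \text{ a match on }\{0,\dots,|w^*|-1\}\}$, and $\delta_\Gamma(u,v)=N_\Gamma(u^{-1}v)$, a left-invariant metric on $F(X)$. Scale of a group: for a topological group $G$ with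 compatible left-invariant metric $d_G$, $\Gamma_G(g,r)=\max\{r,\sup\{d_G(1_G,g^{-1}hg):d_G(1_G,h)\le r\}\}$. Baire space: $\mathcal N=\omega^\omega$ with metric $d(x,y)=\max\{2^{-n}:x(n)\ne y(n)\}$ ($d(x,x)=0$). *)

From HB Require Import structures.
From mathcomp Require Import all_boot all_order all_algebra.
From mathcomp Require Import all_classical all_reals all_analysis.
From Stdlib Require Import ClassicalEpsilon.
Set Implicit Arguments. Unset Strict Implicit. Unset Printing Implicit Defensive.
Import Order.TTheory GRing.Theory Num.Theory.
Import numFieldNormedType.Exports.
Local Open Scope classical_set_scope.
Local Open Scope ring_scope.

(* Letters of X-bar = X ∪ X^{-1} ∪ {e}. *)
Inductive letter (X : Type) : Type :=
| Gen of X
| Inv of X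
| E.
Arguments E {X}.

Definition linv (X : Type) (a : letter X) : letter X :=
  match a with Gen x => Inv x | Inv x => Gen x | E => E end.

(* Extension of a metric d <= 1 on X to X-bar. *)
Definition dbar (R : realType) (X : Type) (d : X -> X -> R) (a b : letter X) : R :=
  match a, b with
  | Gen x, Gen y => d x y
  | Inv x, Inv y => d x y
  | E, E => 0
  | _, _ => 1
  end.

Definition irreducible (X : Type) (w : seq (letter X)) : Prop :=
  w = [:: E] \/
  (w <> [::] /\ (forall i, (i < size w)%N -> nth E w i <> E) /\
   (forall i, (i.+1 < size w)%N -> nth E w i <> linv (nth E w i.+1))).

Definition red_step (X : Type) (w v : seq (letter X)) : Prop :=
  (exists w1 w2 x, w = w1 ++ [:: x; linv x] ++ w2 /\ v = w1 ++ [:: E] ++ w2) \/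
  (exists w1 w2, w = w1 ++ E :: w2 /\ (w1 <> [::] \/ w2 <> [::]) /\ v = w1 ++ w2).

Inductive red_star (X : Type) : seq (letter X) -> seq (letter X) -> Prop :=
| red_refl w : red_star w w
| red_trans u v w : red_step u v -> red_star v w -> red_star u w.

Definition reduced (X : Type) (w : seq (letter X)) : seq (letter X) :=
  epsilon (inhabits [:: E]) (fun v => irreducible v /\ red_star w v).

Definition fmul (X : Type) (u v : seq (letter X)) := reduced (u ++ v).
Definition finv (X : Type) (u : seq (letter X)) := rev (map (@linv X) u).

Definition is_match (m n : nat) (th : nat -> nat) : Prop :=
  (forall i, (m <= i <= n)%N -> (m <= th i <= n)%N /\ th (th i) = i) /\
  (forall i j, (m <= i <= n)%N -> (m <= j <= n)%N ->
     ~ [/\ (i < j)%N, (j < th i)%N & (th i < th j)%N]).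

Definition is_scale (R : realType) (X : Type) (Gam : letter X -> R -> R) : Prop :=
  [/\ (forall r, 0 <= r -> Gam E r = r),
      (forall x r, 0 <= r -> r <= Gam x r),
      (forall x r, 0 <= r -> (Gam x r = 0 <-> r = 0)),
      (forall x r s, 0 <= r -> r <= s -> Gam x r <= Gam x s) &
      (forall x, Gam x r @[r --> 0^'+] --> 0)].

Section Norms.
Variables (R : realType) (X : Type) (d : X -> X -> R) (Gam : letter X -> R -> R).

(* N^theta_Gamma on a word whose first letter has index m; fuel = size. *)
Fixpoint Nf (fuel : nat) (th : nat -> nat) (m : nat) (w : seq (letter X)) : R :=
  match fuel with
  | 0 => 0
  | fuel'.+1 =>
    match w with
    | [::] => 0
    | [:: a] => dbar d E a
    | a :: t =>
      let k := (th m - m)%N in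
      if (k < (size w).-1)%N then
        Nf fuel' th m (take k.+1 w) + Nf fuel' th (m + k.+1) (drop k.+1 w)
      else
        let x := linv a in
        let y := last a t in
        let w1 := take (size w - 2) (drop 1 w) in
        let n1 := Nf fuel' th m.+1 w1 in
        dbar d x y + Num.max (Gam x n1) (Gam y n1)
    end
  end.

Definition Ntheta (th : nat -> nat) (w : seq (letter X)) : R := Nf (size w) th 0 w.

Definition NGamma (w : seq (letter X)) : R :=
  inf [set z | exists ws th, [/\ ws <> [::], reduced ws = w,
                 is_match 0 (size ws).-1 th & z = Ntheta th ws]].

Definition deltaGamma (u v : seq (letter X)) : R := NGamma (fmul (finv u) v).

Definition GammaG (g : seq (letter X)) (r : R) : \bar R :=
  maxe r%:E (ereal_sup [set (deltaGamma [:: E] (fmul (fmul (finv g) h) g))%:E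
                       | h in [set h | irreducible h /\ deltaGamma [:: E] h <= r]]).
End Norms.

Definition baire := nat -> nat.
Definition dBaire (R : realType) (x y : baire) : R :=
  sup ([set 0] `|` [set (2%:R : R) ^- n | n in [set n | x n <> y n]]).

From Pilot Require Import Defs.
From HB Require Import structures.
From mathcomp Require Import all_boot all_order all_algebra.
From mathcomp Require Import all_classical all_reals all_analysis.
From Stdlib Require Import ClassicalEpsilon.
From mathcomp Require Import zify.
Import Order.TTheory GRing.Theory Num.Theory.
Import numFieldNormedType.Exports.
Local Open Scope classical_set_scope.
Local Open Scope ring_scope.

(* If h has norm at most r, every representation (ws, th) of h gives a
   representation of w^{-1} h w: wrap ws as w^{-1} ws w and pair the two new
   end letters by the match. Its norm is d(w,w) + Gam(w, N^th(ws)) =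
   Gam(w, N^th(ws)), so N(w^{-1} h w) <= Gam(w, z) for all z arbitrarily close
   to N(h) from above; monotonicity and continuity of Gam(w, .) at r then give
   N(w^{-1} h w) <= Gam(w, r). *)

Set Implicit Arguments. Unset Strict Implicit.

Section FreeReduction.
Variable X : Type.
Implicit Types (a b : letter X) (s t u v : seq (letter X)).

Lemma linvK a : linv (linv a) = a. Proof. by case: a. Qed.

Lemma linv_neqE a : a <> E -> linv a <> E. Proof. by case: a. Qed.

(* Free reduction as a stack machine: reading a word from the right, each
   letter either cancels the top of the (reduced) stack or is pushed on it. *)
Definition push a s : seq (letter X) :=
  if a is E then s else
  if s is b :: s' then (if pselect (b = linv a) then s' else a :: s) else [:: a].

Fixpoint is_reduced s : Prop :=
  if s is a :: t then
    [/\ a <> E, is_reduced t & if t is b :: _ then b <> linv a else True]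
  else True.

Definition stack u := foldr push [::] u.

Definition nonempty_or_E s : seq (letter X) := if s is _ :: _ then s else [:: E].

Definition normal_form u := nonempty_or_E (stack u).

Lemma pushE a s : a <> E -> push a s =
  if s is b :: s' then (if pselect (b = linv a) then s' else a :: s) else [:: a].
Proof. by case: a. Qed.

Lemma push_reduced a s : is_reduced s -> is_reduced (push a s).
Proof.
case: (pselect (a = E)) => [->//|aE]; rewrite pushE //.
by case: s => [|b s'] //=; case: pselect => [_ []//|bNa rs]; split.
Qed.

Lemma foldr_push_reduced t u : is_reduced t -> is_reduced (foldr push t u).
Proof. by move=> rt; elim: u => //= a u; apply: push_reduced. Qed.

Lemma stack_reduced u : is_reduced (stack u). Proof. exact: foldr_push_reduced. Qed.

Lemma push_linv a s : is_reduced s -> push a (push (linv a) s) = s.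
Proof.
case: (pselect (a = E)) => [->//|aE] rs.
rewrite (pushE _ (linv_neqE aE)); case: s rs => [|b s'] /=.
  by rewrite pushE //; case: pselect.
move=> [bE rs' bN]; case: pselect => [|bNa] /=; last first.
  by rewrite pushE //; case: pselect.
move=> bl; rewrite linvK in bl; subst b; rewrite pushE //.
by case: s' rs' bN => // c s'' _ cN; case: pselect.
Qed.

Lemma stack_id s : is_reduced s -> stack s = s.
Proof.
elim: s => //= a t IH [aE rt bN]; rewrite IH // pushE //.
by case: t {rt IH} bN => // b t' bN; case: pselect.
Qed.

Lemma foldr_push_push t a s : is_reduced t ->
  foldr push t (push a s) = push a (foldr push t s).
Proof.
move=> rt; case: (pselect (a = E)) => [->//|aE]; rewrite pushE //.
case: s => [|b s'] //=; case: pselect => [bl|//] /=; subst b.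
by rewrite push_linv //; apply: foldr_push_reduced.
Qed.

Lemma foldr_push_stack t u : is_reduced t -> foldr push t u = foldr push t (stack u).
Proof. by move=> rt; elim: u => //= a u ->; rewrite foldr_push_push. Qed.

Lemma stack_cat u v : stack (u ++ v) = foldr push (stack v) u.
Proof. exact: foldr_cat. Qed.

Lemma red_step_stack u v : red_step u v -> stack u = stack v.
Proof.
case=> [[w1 [w2 [x [-> ->]]]]|[w1 [w2 [-> [_ ->]]]]]; rewrite !stack_cat //=.
by rewrite push_linv //; apply: stack_reduced.
Qed.

Lemma red_star_stack u v : red_star u v -> stack u = stack v.
Proof. by elim=> // u0 v0 w0 /red_step_stack ->. Qed.

Lemma red_star_trans u v w : red_star u v -> red_star v w -> red_star u w.
Proof. by elim=> // u0 v0 w0 h _ IH /IH; apply: red_trans. Qed.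

Lemma red_star_cons a u v : red_star u v -> red_star (a :: u) (a :: v).
Proof.
elim=> [w0|u0 v0 w0 h _ IH]; first exact: red_refl.
apply: red_trans IH.
case: h => [[w1 [w2 [x [-> ->]]]]|[w1 [w2 [-> [_ ->]]]]].
  by left; exists (a :: w1), w2, x.
by right; exists (a :: w1), w2; do !split; left.
Qed.

Lemma red_star_drop_E s : s <> [::] -> red_star (E :: s) s.
Proof.
by move=> sN; apply: red_trans (red_refl _); right; exists [::], s; do !split; right.
Qed.

Lemma red_star_push a s : is_reduced s ->
  red_star (a :: nonempty_or_E s) (nonempty_or_E (push a s)).
Proof.
case: s => [|b s] /= rs.
  apply: (@red_trans _ _ [:: a]); first by right; exists [:: a], [::]; do !split; left.
  by case: a; constructor.
case: (pselect (a = E)) => [->|aE]; first exact: red_star_drop_E.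
rewrite pushE //; destruct (pselect (b = linv a)) as [bl|bNa]; last exact: red_refl.
rewrite /= {}bl.
apply: (@red_trans _ _ (E :: s)); first by left; exists [::], s, a.
by case: s {rs} => [|c s]; [apply: red_refl | apply: red_star_drop_E].
Qed.

Lemma red_star_normal_form u : u <> [::] -> red_star u (normal_form u).
Proof.
elim: u => [//|a [|b u] IH] _; first by case: a; constructor.
apply: red_star_trans (red_star_cons a (IH _)) _ => //.
exact: red_star_push (stack_reduced _).
Qed.

Lemma is_reducedP s : is_reduced s <->
  (forall i, (i < size s)%N -> nth E s i <> E) /\
  (forall i, (i.+1 < size s)%N -> nth E s i <> linv (nth E s i.+1)).
Proof.
elim: s => [|a t IH] /=; first by split => // _; split.
split.
  move=> [aE /IH [h1 h2] ht]; split; first by case.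
  case=> [|i] /=; last exact: h2.
  by case: t ht {h1 h2 IH} => //= b t bN _ abN; apply: bN; rewrite abN linvK.
move=> [h1 h2]; split; first exact: (h1 0%N).
  by apply/IH; split => i; [apply: (h1 i.+1) | apply: (h2 i.+1)].
case: t h1 h2 {IH} => //= b t _ h2 bN; apply: (h2 0%N) => //=.
by rewrite bN linvK.
Qed.

Lemma normal_form_irreducible u : irreducible (normal_form u).
Proof.
rewrite /normal_form; case: (stack u) (stack_reduced u) => [|c s] rs; first by left.
by right; split=> //; apply/is_reducedP.
Qed.

Lemma irreducible_normal_form v : irreducible v -> normal_form v = v.
Proof.
case=> [->//|[vN /is_reducedP rv]].
by rewrite /normal_form stack_id //; case: v vN {rv}.
Qed.

Lemma stack_normal_form u : stack (normal_form u) = stack u.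
Proof.
rewrite /normal_form; case: (stack u) (stack_reduced u) => [|c s] rs //.
exact: stack_id.
Qed.

Lemma reduced_normal_form u : u <> [::] -> reduced u = normal_form u.
Proof.
move=> uN; rewrite /reduced.
set P := fun v => irreducible v /\ red_star u v.
have [] : P (epsilon (inhabits [:: E]) P).
  apply: epsilon_spec; exists (normal_form u).
  by split; [apply: normal_form_irreducible | apply: red_star_normal_form].
move=> irr /red_star_stack ustack.
by rewrite -(irreducible_normal_form irr) /normal_form ustack.
Qed.

Lemma normal_form_stack u v : stack u = stack v -> normal_form u = normal_form v.
Proof. by rewrite /normal_form => ->. Qed.

Lemma reduced_conj w ws (h : seq (letter X)) : ws <> [::] ->
  reduced ws = reduced (E :: h) ->
  reduced (linv w :: ws ++ [:: w]) =
  reduced ([:: E] ++ Defs.fmul (Defs.fmul (Defs.finv [:: w]) h) [:: w]).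
Proof.
move=> wsN hr; have catN u : normal_form u ++ [:: w] <> [::] by case: (normal_form u).
rewrite /Defs.fmul /Defs.finv /= !reduced_normal_form //.
have stack_ws : stack ws = stack h.
  by have := congr1 stack hr; rewrite !reduced_normal_form // !stack_normal_form.
apply: normal_form_stack.
have rw := stack_reduced [:: w].
rewrite [in RHS]/stack /= -/(stack _) stack_normal_form !stack_cat.
rewrite (foldr_push_stack ws rw) (foldr_push_stack (normal_form _) rw).
by rewrite stack_normal_form stack_ws /= foldr_push_push.
Qed.

End FreeReduction.

Section Norms.
Variables (R : realType) (X : Type) (d : X -> X -> R) (Gam : letter X -> R -> R).

Lemma Nf_fuel f1 f2 th m w : (size w <= f1)%N -> (size w <= f2)%N ->
  Nf d Gam f1 th m w = Nf d Gam f2 th m w.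
Proof.
elim: f1 f2 th m w => [|f1 IH] [|f2] th m [|a [|b t]] //= h1 h2.
case: ifP => hk; rewrite !(IH f2) //= ?size_take ?size_drop /=;
  try case: ifP; lia.
Qed.

Lemma Nf_shift f th th' m w :
  (forall i, (m <= i < m + size w)%N -> th' i.+1 = (th i).+1) ->
  Nf d Gam f th' m.+1 w = Nf d Gam f th m w.
Proof.
elim: f th th' m w => [//|f IH] th th' m [//|a [//|b t]] H /=.
have -> : (th' m.+1 - m.+1 = th m - m)%N by rewrite H ?subSS //=; lia.
case: ifP => hk; [rewrite addSn (IH th) ?(IH th) | rewrite (IH th)] => // i hi;
  apply: H; move: hi; rewrite /= ?size_take ?size_drop /=; try case: ifP; lia.
Qed.

Lemma Nf_ge0 f th m w : (forall x y, 0 <= d x y) ->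
  (forall x r, 0 <= r -> r <= Gam x r) -> 0 <= Nf d Gam f th m w.
Proof.
move=> d_ge0 Gam_ge.
have dbar_ge0 a b : 0 <= dbar d a b by case: a; case: b => * //=; rewrite ?ler01.
elim: f th m w => [//|f IH] th m [//|a [|b t]]; first exact: dbar_ge0.
rewrite /=; case: ifP => _; first by rewrite addr_ge0.
rewrite addr_ge0 // le_max; apply/orP; left.
exact: le_trans (IH _ _ _) (Gam_ge _ _ (IH _ _ _)).
Qed.

Lemma Nf_paired_ends f th m a b t : ((size t).+1 <= th m - m)%N ->
  Nf d Gam f.+1 th m (a :: b :: t) =
  dbar d (linv a) (last b t) +
  Num.max (Gam (linv a) (Nf d Gam f th m.+1 (take (size t) (b :: t))))
          (Gam (last b t) (Nf d Gam f th m.+1 (take (size t) (b :: t)))).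
Proof. by move=> h; rewrite /= ifF ?subn2 //; apply/negbTE; rewrite -leqNgt. Qed.

End Norms.

Definition match_wrap (n : nat) (th : nat -> nat) (i : nat) : nat :=
  if i == 0%N then n.+1 else if i == n.+1 then 0%N else (th i.-1).+1.

Lemma match_wrap_mid n th i : (0 < i <= n)%N -> match_wrap n th i = (th i.-1).+1.
Proof.
by move=> hi; rewrite /match_wrap; case: (i =P 0%N); case: (i =P n.+1) => //; lia.
Qed.

Lemma is_match_wrap n th : (0 < n)%N ->
  is_match 0 n.-1 th -> is_match 0 n.+1 (match_wrap n th).
Proof.
move=> n0 [th_inv th_nocross].
have wrap_inv i : (i <= n.+1)%N ->
    (match_wrap n th i <= n.+1)%N /\ match_wrap n th (match_wrap n th i) = i.
  move=> hi; case: (i =P 0%N) => [->|i0]; first by rewrite /match_wrap eqxx /= eqxx.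
  case: (i =P n.+1) => [->|i1]; first by rewrite /match_wrap /= eqxx.
  have [th_le th_th] := th_inv i.-1 ltac:(lia).
  rewrite (@match_wrap_mid n th i) ?match_wrap_mid /= ?th_th; try split; lia.
split=> [i /wrap_inv //|i j hi hj [ij jt tt]].
have [wj _] := wrap_inv j hj.
case: (i =P 0%N) => [i0|i0].
  by have w0 : match_wrap n th 0 = n.+1 by []; move: tt; rewrite i0 w0; lia.
case: (j =P n.+1) => [j1|j1]; first lia.
move: jt tt; rewrite !match_wrap_mid; try lia.
by move=> jt tt; apply: (th_nocross i.-1 j.-1); try split; lia.
Qed.

Section Conjugation.
Variables (R : realType) (X : Type) (d : X -> X -> R) (Gam : letter X -> R -> R).

Lemma Ntheta_conj th w ws : dbar d w w = 0 -> ws <> [::] ->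
  Ntheta d Gam (match_wrap (size ws) th) (linv w :: ws ++ [:: w]) =
  Gam w (Ntheta d Gam th ws).
Proof.
case: ws => [//|b t] dww _.
rewrite /Ntheta cat_cons cats1 (_ : size _ = (size (rcons t w)).+2) //.
rewrite Nf_paired_ends; last by rewrite /match_wrap /= size_rcons subn0.
rewrite linvK last_rcons dww add0r maxxx size_rcons -cats1 -cat_cons.
rewrite (take_size_cat _ (s1 := b :: t)) // (@Nf_shift _ _ _ _ _ th).
  by rewrite (@Nf_fuel _ _ _ _ _ (size t).+1).
by move=> i hi; rewrite match_wrap_mid //=; lia.
Qed.

Definition norm_values (w : seq (letter X)) : set R :=
  [set z | exists ws th, [/\ ws <> [::], reduced ws = w,
             is_match 0 (size ws).-1 th & z = Ntheta d Gam th ws]].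

Lemma NGammaE w : NGamma d Gam w = inf (norm_values w). Proof. by []. Qed.

Lemma norm_values_ge0 w : (forall x y, 0 <= d x y) ->
  (forall x r, 0 <= r -> r <= Gam x r) -> lbound (norm_values w) 0.
Proof. by move=> d_ge0 Gam_ge _ [ws [th [_ _ _ ->]]]; apply: Nf_ge0. Qed.

Lemma norm_values_neq0 (h : seq (letter X)) : norm_values (reduced (E :: h)) !=set0.
Proof.
exists (Ntheta d Gam id (E :: h)), (E :: h), id; split => //.
by split => // i j _ _ [ij ji _]; move: ji; rewrite ltnNge ltnW.
Qed.

Lemma norm_values_conj w (h : seq (letter X)) z : dbar d w w = 0 ->
  norm_values (reduced (E :: h)) z ->
  norm_values (reduced ([:: E] ++ Defs.fmul (Defs.fmul (Defs.finv [:: w]) h) [:: w]))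
    (Gam w z).
Proof.
move=> dww [ws [th [wsN hr m_th ->]]].
exists (linv w :: ws ++ [:: w]), (match_wrap (size ws) th); split => //.
- exact: reduced_conj.
- rewrite /= size_cat addn1; apply: is_match_wrap => //.
  by case: ws wsN {hr m_th}.
- by rewrite Ntheta_conj.
Qed.

End Conjugation.

(* Monotonicity handles the points of S below r, continuity at r the ones
   slightly above it. *)
Lemma inf_le_mono_continuous (R : realType) (f : R -> R) (S T : set R) r :
  (forall x y, 0 <= x -> x <= y -> f x <= f y) ->
  {within [set x | 0 <= x], continuous f} -> 0 <= r ->
  S !=set0 -> lbound S 0 -> inf S <= r ->
  lbound T 0 -> (forall z, S z -> T (f z)) -> inf T <= f r.
Proof.
move=> f_mono f_cont r0 S_neq0 S_ge0 infS_le T_ge0 ST.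
apply/ler_addgt0Pr => e e0.
have /cvgrPdist_lt /(_ e e0) /nbhs_ballP [del del0 f_near] :=
  (subspace_continuousP _ _).1 f_cont r r0.
have [z Sz z_lt] := inf_adherent del0 (conj S_neq0 (ex_intro _ 0 S_ge0)).
apply: le_trans (ge_inf (ex_intro _ 0 T_ge0) (ST z Sz)) _.
have z0 : 0 <= z := S_ge0 z Sz.
have [zr|rz] := leP z r; first by apply: le_trans (f_mono _ _ z0 zr) _; rewrite lerDl ltW.
have /f_near /(_ z0) : ball r del z.
  rewrite /ball /= distrC ger0_norm ?subr_ge0 ?ltW // ltrBlDl.
  by apply: lt_le_trans z_lt _; rewrite lerD.
by rewrite ltr_distlC => /andP [_ /ltW].
Qed.

Lemma GammaG_letter_le (R : realType) (X : Type) (d : X -> X -> R)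
    (Gam : letter X -> R -> R) (w : letter X) (r : R) :
  (forall x y, 0 <= d x y) -> (forall x, d x x = 0) -> is_scale Gam ->
  {within [set s : R | 0 <= s], continuous (Gam w)} -> 0 <= r ->
  (GammaG d Gam [:: w] r <= (Gam w r)%:E)%E.
Proof.
move=> d_ge0 d_xx [_ Gam_ge _ Gam_mono _] Gam_cont r0.
have dww : dbar d w w = 0 by case: w Gam_cont => [x|x|] _ /=; rewrite ?d_xx.
rewrite /GammaG ge_max lee_fin Gam_ge //=.
apply: ge_ereal_sup => _ [h [_ h_le] <-]; rewrite lee_fin.
rewrite /deltaGamma /Defs.fmul /= !NGammaE in h_le *.
apply: (inf_le_mono_continuous (Gam_mono w) Gam_cont r0 (norm_values_neq0 d Gam h)).
- exact: norm_values_ge0.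
- exact: h_le.
- exact: norm_values_ge0.
- by move=> z; apply: norm_values_conj.
Qed.

Lemma dBaire_ge0 (R : realType) (x y : baire) : 0 <= dBaire R x y.
Proof.
apply: sup_upper_bound; last by left.
split; first by exists 0; left.
exists 1 => _ [->|[n _ <-]]; first exact: ler01.
by rewrite invr_le1 ?unitfE ?expf_neq0 ?pnatr_eq0 ?exprn_ege1 ?ler1n.
Qed.

Lemma dBaire_xx (R : realType) (x : baire) : dBaire R x x = 0.
Proof.
rewrite /dBaire (_ : [set _ | n in _] = set0) ?setU0 ?sup1 //.
by apply/seteqP; split => y //=; case.
Qed.

Theorem lemma3p3 (R : realType) (Gam : letter baire -> R -> R) :
  is_scale Gam ->
  (forall x : letter baire, {within [set r : R | 0 <= r], continuous (Gam x)}) ->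
  forall (w : letter baire) (r : R), 0 <= r ->
    (GammaG (@dBaire R) Gam [:: w] r <= (Gam w r)%:E)%E.
Proof.
move=> Gam_scale Gam_cont w r r0.
exact: GammaG_letter_le (@dBaire_ge0 R) (@dBaire_xx R) Gam_scale (Gam_cont w) r0.
Qed.
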